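(* $c(7)\ge 5$.
   Context: $\mathbb{F}_q$ is the finite field with $q$ elements. Hamming distance $d(u,v)=|\{i:u_i\ne v_i\}|$ on $\mathbb{F}_q^3$; $B(u)=\{v:d(u,v)\le1\}$; $E(u)=\bigcup_{\lambda\in\mathbb{F}_q}B(\lambda u)$. A set $\mathcal{H}\subseteq\mathbb{F}_q^3$ is a short covering if $\bigcup_{h\in\mathcal{H}}E(h)=\mathbb{F}_q^3$; $c(q)$ is the minimum cardinality of a short covering of $\mathbb{F}_q^3$. *)

From mathcomp Require Import all_boot all_order all_algebra.
Set Implicit Arguments. Unset Strict Implicit. Unset Printing Implicit Defensive.
Import GRing.Theory.
Local Open Scope ring_scope.

Section ShortCovering.
Variable F : finFieldType.

Definition hamming (u v : 'rV[F]_3) : nat := #|[set i : 'I_3 | u 0 i != v 0 i]|.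

Definition ball (u : 'rV[F]_3) : {set 'rV[F]_3} := [set v | (hamming u v <= 1)%N].

Definition Eball (u : 'rV[F]_3) : {set 'rV[F]_3} :=
  \bigcup_(lam : F) ball (lam *: u).

Definition short_covering (H : {set 'rV[F]_3}) : bool :=
  \bigcup_(h in H) Eball h == [set: 'rV[F]_3].

(* c(q): minimum cardinality of a short covering (the full space is one,
   so the default value #|F^3| is never strictly below the true minimum) *)
Definition c_min : nat :=
  \big[minn/#|[set: 'rV[F]_3]|]_(H : {set 'rV[F]_3} | short_covering H) #|H|.
End ShortCovering.

From mathcomp Require Import all_boot all_order all_algebra.
Set Implicit Arguments. Unset Strict Implicit. Unset Printing Implicit Defensive.
Import GRing.Theory.
Local Open Scope ring_scope.

(* Since [E(mu u) = E(u)] for [mu != 0], a short covering can be assumed to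
   consist of the zero vector and normalised representatives of the 57 points
   of the projective plane over F_7.  A certified branch-and-bound search then
   shows that no four of the sets [E(r)] cover all 343 vectors: it repeatedly
   picks the first uncovered vector and branches over the rows covering it. *)

Lemma mem_allpairs_pair (S T : eqType) (s : seq S) (t : seq T) x y :
  ((x, y) \in [seq (x, y) | x <- s, y <- t]) = (x \in s) && (y \in t).
Proof.
apply/allpairsP/andP => [[[x' y'] /= [x'_in y'_in [-> ->]]]|[x_in y_in]] //.
by exists (x, y).
Qed.

Fixpoint uncover (unc row : seq bool) : seq bool :=
  match unc, row with
  | a :: unc', b :: row' => (a && ~~ b) :: uncover unc' row'
  | _, _ => unc
  end.

Lemma nth_uncover unc row i :
  nth false (uncover unc row) i = nth false unc i && ~~ nth false row i.
Proof.
elim: unc row i => [|a unc IH] [|b row] [|i] //=; by rewrite ?andbT ?nth_nil.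
Qed.

Fixpoint no_cover (T : seq (seq bool)) (n : nat) (unc : seq bool) : bool :=
  if has id unc then
    if n is n'.+1 then
      let k := find id unc in
      (* an [if] rather than [==>]: [vm_compute] would evaluate both arguments *)
      all (fun row => if nth false row k then no_cover T n' (uncover unc row) else true) T
    else true
  else false.

Lemma no_coverP T n unc : no_cover T n unc ->
  forall rows, (size rows <= n)%N -> {subset rows <= T} ->
  exists2 i, nth false unc i & all (fun row => ~~ nth false row i) rows.
Proof.
elim: n unc => [|n IH] unc /=.
  case unc_has: (has id unc) => // _ [|//] _ _.
  by exists (find id unc); rewrite ?(nth_find false unc_has).
case unc_has: (has id unc) => // /allP branch rows size_rows sub_rows.
have unc_k := nth_find false unc_has.
have [[row row_in row_k]|/hasPn none_k] :=
  altP (@hasP _ (fun row => nth false row (find id unc)) rows); last first.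
  by exists (find id unc) => //; apply/allP => row /none_k.
have := branch row (sub_rows row row_in); rewrite row_k => /IH.
case/(_ (rem row rows)).
- by rewrite size_rem // -subn1 leq_subLR add1n.
- by move=> r /mem_rem /sub_rows.
move=> i; rewrite nth_uncover => /andP[unc_i row_i] rest_i.
by exists i; rewrite // (perm_all _ (perm_to_rem row_in)) /= row_i.
Qed.

Section ShortCoverings.

Variable F : finFieldType.
Implicit Types (u v p : 'rV[F]_3) (H : {set 'rV[F]_3}).

Lemma hammingE u v : hamming u v = (\sum_(i < 3) (u ord0 i != v ord0 i))%N.
Proof.
rewrite /hamming -sum1_card big_mkcond.
by apply: eq_bigr => i _; rewrite inE; case: ifP.
Qed.

Lemma Eball_scale (mu : F) u p : mu != 0 -> (p \in Eball (mu *: u)) = (p \in Eball u).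
Proof.
move=> m_neq0; apply/bigcupP/bigcupP => [[lam _ p_in]|[lam _ p_in]].
- by exists (lam * mu) => //; rewrite -scalerA.
- by exists (lam / mu) => //; rewrite scalerA mulfVK.
Qed.

Lemma short_coveringP H : short_covering H -> forall p, exists2 h, h \in H & p \in Eball h.
Proof. by move=> /eqP covH p; apply/bigcupP; rewrite covH inE. Qed.

Lemma c_min_ge (k : nat) : (k <= #|[set: 'rV[F]_3]|)%N ->
  (forall H, short_covering H -> k <= #|H|)%N -> (k <= c_min F)%N.
Proof.
move=> k_le_full k_le_cov; apply: (big_ind (fun m => k <= m)%N) => //.
by move=> x y kx ky; rewrite leq_min kx ky.
Qed.

End ShortCoverings.

Definition triple := (nat * nat * nat)%type.

Definition tscale (m : nat) (x : triple) : triple :=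
  let: (a, b, c) := x in ((m * a) %% 7, (m * b) %% 7, (m * c) %% 7)%N.

Definition thamming (x y : triple) : nat :=
  let: (a, b, c) := x in let: (a', b', c') := y in
  ((a != a') + (b != b') + (c != c'))%N.

Definition tcovers (u x : triple) : bool :=
  has (fun m => thamming (tscale m u) x <= 1)%N (iota 0 7).

Definition triples : seq triple :=
  [seq (ab, c) | ab <- [seq (a, b) | a <- iota 0 7, b <- iota 0 7], c <- iota 0 7].

Definition leading_one (x : triple) : bool :=
  let: (a, b, c) := x in
  ((a == 1) || (a == 0) && ((b == 1) || (b == 0) && (c <= 1)))%N.

Definition reps : seq triple := [seq x <- triples | leading_one x].

Definition cover_row (u : triple) : seq bool := [seq tcovers u x | x <- triples].

Lemma no_cover_by_four_reps : no_cover (map cover_row reps) 4 (nseq (size triples) true).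
Proof. by vm_compute. Qed.

Definition normalizer (x : triple) : nat :=
  head 1%N [seq m <- iota 1 6 | tscale m x \in reps].

Lemma normalizer_reps :
  all (fun x => (0 < normalizer x < 7)%N && (tscale (normalizer x) x \in reps)) triples.
Proof. by vm_compute. Qed.

Lemma mem_triples (x : triple) :
  (x \in triples) = [&& x.1.1 < 7, x.1.2 < 7 & x.2 < 7]%N.
Proof. by case: x => [[a b] c]; rewrite !mem_allpairs_pair !mem_iota -andbA. Qed.

Notation V := 'rV['F_7]_3.

Definition encode (u : V) : triple := (u 0 0 : nat, u 0 1 : nat, u 0 2 : nat).

Lemma encode_triples (u : V) : encode u \in triples.
Proof. by rewrite mem_triples !ltn_ord. Qed.

Lemma encode_surj (x : triple) : x \in triples -> exists u : V, encode u = x.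
Proof.
case: x => [[a b] c]; rewrite mem_triples => /and3P[ha hb hc].
exists (\row_(j < 3) inord (nth 0%N [:: a; b; c] j)).
by rewrite /encode !mxE /= !inordK.
Qed.

Lemma hamming_encode (u v : V) : hamming u v = thamming (encode u) (encode v).
Proof.
have lift1 : lift ord0 ord0 = 1 :> 'I_3 by apply: val_inj.
have lift2 : lift ord0 (lift ord0 ord0) = 2 :> 'I_3 by apply: val_inj.
by rewrite hammingE !big_ord_recl big_ord0 addn0 addnA lift2 lift1.
Qed.

Lemma encodeZ (lam : 'F_7) (u : V) : encode (lam *: u) = tscale lam (encode u).
Proof. by rewrite /encode !mxE. Qed.

Lemma Eball_encode (u p : V) : (p \in Eball u) = tcovers (encode u) (encode p).
Proof.
apply/bigcupP/hasP => [[lam _]|[m]].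
  rewrite inE hamming_encode encodeZ => near_p.
  by exists (lam : nat); rewrite // mem_iota ltn_ord.
rewrite mem_iota => /andP[_ m_lt7] near_p.
by exists (inord m) => //; rewrite inE hamming_encode encodeZ inordK.
Qed.

Definition rep (u : V) : triple := tscale (normalizer (encode u)) (encode u).

Lemma rep_reps (u : V) : rep u \in reps.
Proof. by have /andP[] := allP normalizer_reps _ (encode_triples u). Qed.

Lemma Eball_rep (u p : V) : (p \in Eball u) = tcovers (rep u) (encode p).
Proof.
have /andP[/andP[m_gt0 m_lt7] _] := allP normalizer_reps _ (encode_triples u).
set m := normalizer _ in m_gt0 m_lt7 *.
have m_neq0 : (inord m : 'F_7) != 0.
  by apply: contraTneq m_gt0 => /(congr1 val); rewrite /= inordK // => ->.
by rewrite -(Eball_scale u p m_neq0) Eball_encode encodeZ inordK.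
Qed.

Lemma short_covering_F7_card_ge5 (H : {set V}) : short_covering H -> (5 <= #|H|)%N.
Proof.
move=> covH; rewrite leqNgt; apply/negP => small_H.
have [||i] := no_coverP no_cover_by_four_reps (rows := map cover_row (map rep (enum H))).
- by rewrite !size_map -cardE -ltnS.
- by move=> _ /mapP[_ /mapP[h _ ->] ->]; rewrite map_f ?rep_reps.
rewrite nth_nseq; case: ltnP => // i_lt _ /allP uncovered.
have [p encode_p] := encode_surj (mem_nth (0, 0, 0)%N i_lt).
have [h h_in p_in] := short_coveringP covH p.
have row_in : cover_row (rep h) \in map cover_row (map rep (enum H)).
  by rewrite !map_f ?mem_enum.
have := uncovered _ row_in; rewrite (nth_map (0, 0, 0)%N) // -encode_p.
by rewrite -Eball_rep p_in.
Qed.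

Theorem proposition19 : (5 <= c_min 'F_7)%N.
Proof.
apply: c_min_ge; last exact: short_covering_F7_card_ge5.
by rewrite cardsT card_mx card_Fp.
Qed.
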